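(* Let $A\subset\mathbb{N}$. Suppose there exist a Følner sequence $\Phi$ in $\mathbb{N}$, a set $L\subset\mathbb{N}$ and $\epsilon>0$ such that $\mathsf{d}_\Phi\big((A-m)\cap L\big)$ exists for every $m\in\mathbb{N}$, and such that for every finite subset $F\subset L$ the set $$\bigcap_{\ell\in F}(A-\ell)\ \cap\ \Big\{m\in\mathbb{N}:\mathsf{d}_\Phi\big((A-m)\cap L\big)>\epsilon\Big\}$$ is infinite. Then there exist infinite sets $B,C\subset\mathbb{N}$ such that $B+C\subset A$.
   Context: A Følner sequence in $\mathbb{N}$ is a sequence $\Phi\colon N\mapsto\Phi_N$ of finite non-empty subsets of $\mathbb{N}$ with $|(\Phi_N+m)\triangle\Phi_N|/|\Phi_N|\to0$ for all $m\in\mathbb{N}$. For $E\subset\mathbb{N}$, $\mathsf{d}_\Phi(E)=\lim_{N\to\infty}|E\cap\Phi_N|/|\Phi_N|$ when the limit exists. For $m\in\mathbb{N}$, $A-m=\{n\in\mathbb{N}:n+m\in A\}$. *)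

(* Convention: N = {1,2,3,...}; subsets of N are predicates
   on nat contained in [PosN]. *)
From Stdlib Require Import Reals List Arith ClassicalEpsilon.
Open Scope R_scope.

Definition PosN (n : nat) : Prop := (0 < n)%nat.

Definition card_in (E : nat -> Prop) (l : list nat) : nat :=
  length (filter (fun x => if excluded_middle_informative (E x) then true else false) l).

(* |(Phi + m) \triangle Phi| for a duplicate-free list Phi *)
Definition symdiff_shift (Phi : list nat) (m : nat) : nat :=
  (card_in (fun x => ~ In (x + m)%nat Phi) Phi
   + card_in (fun y => ~ exists x, In x Phi /\ (x + m)%nat = y) Phi)%nat.

(* Folner sequence in N: finite non-empty subsets of N (encoded as
   duplicate-free nonempty lists of positive integers) *)
Definition Folner (Phi : nat -> list nat) : Prop :=
  (forall N, NoDup (Phi N) /\ Phi N <> nil /\ (forall x, In x (Phi N) -> PosN x)) /\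
  (forall m, PosN m ->
     Un_cv (fun N => INR (symdiff_shift (Phi N) m) / INR (length (Phi N))) 0).

Definition density_is (Phi : nat -> list nat) (E : nat -> Prop) (d : R) : Prop :=
  Un_cv (fun N => INR (card_in E (Phi N)) / INR (length (Phi N))) d.

Definition shiftset (A : nat -> Prop) (m : nat) : nat -> Prop :=
  fun n => PosN n /\ A (n + m)%nat.

Definition infinite_set (S : nat -> Prop) : Prop :=
  forall k, exists n, (k < n)%nat /\ S n.

(* Fix a nonprincipal ultrafilter U on N and let mu(X) be the U-limit of
   |X /\ Phi_N| / |Phi_N|: a finitely additive mean that extends d_Phi and vanishes
   on finite sets.  Call m K-good if mu((A - m) /\ L) > eps and m + l is in A for
   every l <= K in L, and call W large if for some d > 0 and every K, W has mean at
   least d inside a finite union of sets (A - m) /\ L over K-good m > K.  Then L is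
   large and large sets are infinite.  If W is large, then for every K the set
   W /\ (A - m) is large for arbitrarily big K-good m: otherwise each such piece is
   negligible, hence so is W inside every finite union, and as the means of W inside
   the increasing unions stabilise, W could not be large.  Alternating the two facts
   picks c_1 < c_2 < ... and b_1 < b_2 < ... in L with every b_i + c_j in A. *)

From Stdlib Require Import Reals List Arith.
Open Scope R_scope.
From Stdlib Require Import Lia Lra Classical ClassicalEpsilon.
From mathcomp Require filter.
Set Bullet Behavior "Strict Subproofs".

Lemma card_in_cons X a l :
  card_in X (a :: l) =
  ((if excluded_middle_informative (X a) then 1 else 0) + card_in X l)%nat.
Proof. unfold card_in; simpl. destruct (excluded_middle_informative (X a)); reflexivity. Qed.

Lemma card_in_le_length X l : (card_in X l <= length l)%nat.
Proof.
  induction l as [|a l IH]; [reflexivity|].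
  rewrite card_in_cons; simpl. destruct (excluded_middle_informative (X a)); lia.
Qed.

Lemma card_in_mono X Y l :
  (forall x, X x -> Y x) -> (card_in X l <= card_in Y l)%nat.
Proof.
  intros HXY. induction l as [|a l IH]; [reflexivity|].
  rewrite !card_in_cons.
  destruct (excluded_middle_informative (X a)) as [Xa|Xa];
  destruct (excluded_middle_informative (Y a)) as [Ya|Ya]; try lia.
  exfalso; auto.
Qed.

Lemma card_in_modular X Y l :
  (card_in (fun n => X n \/ Y n) l + card_in (fun n => X n /\ Y n) l =
   card_in X l + card_in Y l)%nat.
Proof.
  induction l as [|a l IH]; [reflexivity|].
  rewrite !card_in_cons.
  destruct (excluded_middle_informative (X a));
  destruct (excluded_middle_informative (Y a));
  destruct (excluded_middle_informative (X a \/ Y a));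
  destruct (excluded_middle_informative (X a /\ Y a)); tauto || lia.
Qed.

Lemma card_in_pos X l x : In x l -> X x -> (1 <= card_in X l)%nat.
Proof.
  induction l as [|a l IH]; intros Hx HX; [destruct Hx|].
  rewrite card_in_cons. destruct Hx as [->|Hx].
  - destruct (excluded_middle_informative (X x)); [lia|contradiction].
  - specialize (IH Hx HX). lia.
Qed.

Lemma card_in_bounded X l k :
  NoDup l -> (forall x, X x -> (x <= k)%nat) -> (card_in X l <= S k)%nat.
Proof.
  intros Hnd Hk. unfold card_in. rewrite <- (length_seq (S k) 0).
  apply NoDup_incl_length; [apply NoDup_filter, Hnd|].
  intros x Hx. apply filter_In in Hx as [_ Hx].
  destruct (excluded_middle_informative (X x)) as [HX|]; [|discriminate].
  apply in_seq. specialize (Hk x HX). lia.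
Qed.

Lemma list_max_In l : l <> nil -> In (list_max l) l.
Proof.
  induction l as [|a l IH]; intros Hl; [contradiction|].
  destruct l as [|b l]; [left; simpl; lia|].
  change (list_max (a :: b :: l)) with (Nat.max a (list_max (b :: l))).
  destruct (Nat.max_spec a (list_max (b :: l))) as [[_ ->]|[_ ->]].
  - right. apply IH. discriminate.
  - left. reflexivity.
Qed.

Lemma In_le_list_max x l : In x l -> (x <= list_max l)%nat.
Proof.
  intros Hx. assert (Hle : (list_max l <= list_max l)%nat) by lia.
  apply list_max_le in Hle. rewrite Forall_forall in Hle. exact (Hle x Hx).
Qed.

Lemma list_of_bounded_pred (P : nat -> Prop) K :
  exists F, forall l, In l F <-> (l <= K)%nat /\ P l.
Proof.
  exists (filter (fun l => if excluded_middle_informative (P l) then true else false)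
            (seq 0 (S K))).
  intros l. rewrite filter_In, in_seq.
  destruct (excluded_middle_informative (P l)); intuition (lia || discriminate).
Qed.

(* The largest element of a nonempty list is moved out of it by the shift. *)
Lemma symdiff_shift_one_pos l : l <> nil -> (1 <= symdiff_shift l 1)%nat.
Proof.
  intros Hl. unfold symdiff_shift.
  assert (Hmax : ~ In (list_max l + 1)%nat l).
  { intros Hin. apply In_le_list_max in Hin. lia. }
  pose proof (card_in_pos (fun x => ~ In (x + 1)%nat l) l _ (list_max_In l Hl) Hmax).
  lia.
Qed.

Lemma iterate_choice {T : Type} (P : T -> Prop) (R : nat -> T -> T -> Prop) (s0 : T) :
  P s0 -> (forall n s, P s -> exists s', P s' /\ R n s s') ->
  exists f : nat -> T, f 0%nat = s0 /\ forall n, P (f n) /\ R n (f n) (f (S n)).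
Proof.
  intros H0 Hstep.
  assert (next : forall n s, {s' | P s -> P s' /\ R n s s'}).
  { intros n s. apply constructive_indefinite_description.
    destruct (classic (P s)) as [Hs|Hs].
    - destruct (Hstep n s Hs) as [s' Hs']. exists s'. auto.
    - exists s. tauto. }
  pose (f := fix f n := match n with O => s0 | S n => proj1_sig (next n (f n)) end).
  assert (HP : forall n, P (f n)).
  { induction n as [|n IH]; [exact H0|]. exact (proj1 (proj2_sig (next n (f n)) IH)). }
  exists f. split; [reflexivity|]. intros n. split; [apply HP|].
  exact (proj2 (proj2_sig (next n (f n)) (HP n))).
Qed.

Lemma sumset_of_extendable (A : nat -> Prop) (P : list nat -> list nat -> Prop) :
  P nil nil ->
  (forall bs cs k, P bs cs ->
     exists b c, (k < b)%nat /\ (k < c)%nat /\ P (b :: bs) (c :: cs)) ->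
  (forall bs cs, P bs cs ->
     (forall b, In b bs -> PosN b) /\ (forall c, In c cs -> PosN c) /\
     (forall b c, In b bs -> In c cs -> A (b + c)%nat)) ->
  exists B C : nat -> Prop,
    (forall n, B n -> PosN n) /\ (forall n, C n -> PosN n) /\
    infinite_set B /\ infinite_set C /\
    (forall b c, B b -> C c -> A (b + c)%nat).
Proof.
  intros H0 Hext Hsound.
  destruct (iterate_choice (fun s => P (fst s) (snd s))
              (fun k s s' => exists b c, (k < b)%nat /\ (k < c)%nat /\
                                         s' = (b :: fst s, c :: snd s))
              (nil, nil) H0) as [f [_ Hf]].
  { intros k [bs cs] Hs. destruct (Hext bs cs k Hs) as [b [c [Hb [Hc Hbc]]]].
    exists (b :: bs, c :: cs). split; [exact Hbc|]. exists b, c. auto. }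
  assert (Hgrow : forall n n', (n <= n')%nat ->
            incl (fst (f n)) (fst (f n')) /\ incl (snd (f n)) (snd (f n'))).
  { induction 1 as [|n' _ [IH1 IH2]]; [split; apply incl_refl|].
    destruct (Hf n') as [_ [b [c [_ [_ ->]]]]]. split; apply incl_tl; assumption. }
  exists (fun b => exists n, In b (fst (f n))), (fun c => exists n, In c (snd (f n))).
  split; [|split; [|split; [|split]]].
  - intros b [n Hb]. exact (proj1 (Hsound _ _ (proj1 (Hf n))) b Hb).
  - intros c [n Hc]. exact (proj1 (proj2 (Hsound _ _ (proj1 (Hf n)))) c Hc).
  - intros k. destruct (Hf k) as [_ [b [c [Hb [_ Hnext]]]]].
    exists b. split; [exact Hb|]. exists (S k). rewrite Hnext. left. reflexivity.
  - intros k. destruct (Hf k) as [_ [b [c [_ [Hc Hnext]]]]].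
    exists c. split; [exact Hc|]. exists (S k). rewrite Hnext. left. reflexivity.
  - intros b c [n Hb] [n' Hc].
    apply (Hsound _ _ (proj1 (Hf (Nat.max n n')))).
    + apply (proj1 (Hgrow n _ (Nat.le_max_l n n'))), Hb.
    + apply (proj2 (Hgrow n' _ (Nat.le_max_r n n'))), Hc.
Qed.

Lemma growing_bounded_tail (a : nat -> R) c d :
  Un_growing a -> (forall n, a n <= c) -> 0 < d ->
  exists M0, forall M, (M0 <= M)%nat -> a M <= a M0 + d.
Proof.
  intros Hgrow Hc Hd.
  destruct (growing_cv a Hgrow) as [l Hl].
  { exists c. intros x [n ->]. apply Hc. }
  destruct (Hl (d / 2) ltac:(lra)) as [M0 HM0]. exists M0. intros M HM.
  pose proof (HM0 M HM) as H1. pose proof (HM0 M0 (le_n M0)) as H2.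
  unfold R_dist in *. apply Rabs_def2 in H1. apply Rabs_def2 in H2. lra.
Qed.

Definition density_ratio (Phi : nat -> list nat) (X : nat -> Prop) (N : nat) : R :=
  INR (card_in X (Phi N)) / INR (length (Phi N)).

(* Also when [Phi N] is empty, since then [0 / 0 = 0]. *)
Lemma density_ratio_bounds Phi X N : 0 <= density_ratio Phi X N <= 1.
Proof.
  unfold density_ratio. pose proof (card_in_le_length X (Phi N)) as Hc.
  destruct (length (Phi N)) as [|l].
  - replace (card_in X (Phi N)) with 0%nat by lia. unfold Rdiv. simpl. lra.
  - apply le_INR in Hc. pose proof (lt_0_INR (S l) ltac:(lia)) as Hl.
    pose proof (pos_INR (card_in X (Phi N))).
    pose proof (Rinv_pos _ Hl). pose proof (Rinv_r _ (Rgt_not_eq _ _ Hl)).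
    unfold Rdiv. split; nra.
Qed.

Lemma density_ratio_mono Phi X Y N :
  (forall n, X n -> Y n) -> density_ratio Phi X N <= density_ratio Phi Y N.
Proof.
  intros HXY. unfold density_ratio, Rdiv. apply Rmult_le_compat_r.
  - destruct (length (Phi N)) as [|l].
    + simpl. rewrite Rinv_0. apply Rle_refl.
    + left. apply Rinv_pos, lt_0_INR. lia.
  - apply le_INR, card_in_mono, HXY.
Qed.

Lemma density_ratio_modular Phi X Y N :
  density_ratio Phi (fun n => X n \/ Y n) N + density_ratio Phi (fun n => X n /\ Y n) N =
  density_ratio Phi X N + density_ratio Phi Y N.
Proof.
  unfold density_ratio. rewrite <- !Rdiv_plus_distr, <- !plus_INR, card_in_modular.
  reflexivity.
Qed.

Lemma folner_length_pos Phi N : Folner Phi -> 0 < INR (length (Phi N)).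
Proof.
  intros [Hlists _]. destruct (Hlists N) as [_ [Hne _]].
  apply lt_0_INR. destruct (Phi N); [contradiction|simpl; lia].
Qed.

Lemma folner_inv_length_cv Phi :
  Folner Phi -> Un_cv (fun N => / INR (length (Phi N))) 0.
Proof.
  intros HPhi e He. pose proof HPhi as [Hlists Hshift].
  destruct (Hshift 1%nat ltac:(unfold PosN; lia) e He) as [N0 HN0].
  exists N0. intros N HN. specialize (HN0 N HN). unfold R_dist in *.
  destruct (Hlists N) as [_ [Hne _]].
  pose proof (le_INR _ _ (symdiff_shift_one_pos _ Hne)) as Hs.
  pose proof (folner_length_pos Phi N HPhi) as Hl.
  set (s := INR (symdiff_shift (Phi N) 1)) in *.
  set (l := INR (length (Phi N))) in *. simpl in Hs.
  pose proof (Rinv_pos l Hl) as Hinv.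
  rewrite Rminus_0_r in *. unfold Rdiv in HN0.
  rewrite Rabs_right in * by nra. nra.
Qed.

Lemma folner_density_bounded Phi X k :
  Folner Phi -> (forall n, X n -> (n <= k)%nat) -> density_is Phi X 0.
Proof.
  intros HPhi Hk e He.
  pose proof (lt_0_INR (S k) ltac:(lia)) as HSk.
  destruct (folner_inv_length_cv Phi HPhi (e / INR (S k))) as [N0 HN0];
    [apply Rdiv_lt_0_compat; lra|].
  exists N0. intros N HN. specialize (HN0 N HN). unfold R_dist in *.
  pose proof (folner_length_pos Phi N HPhi) as Hl.
  destruct HPhi as [Hlists _]. destruct (Hlists N) as [Hnd _].
  pose proof (le_INR _ _ (card_in_bounded X (Phi N) k Hnd Hk)) as Hc.
  pose proof (density_ratio_bounds Phi X N) as [H0 _].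
  pose proof (Rinv_pos _ Hl) as Hinv.
  unfold density_ratio, Rdiv in *. rewrite Rminus_0_r, Rabs_right in * by lra.
  apply (Rle_lt_trans _ (INR (S k) * / INR (length (Phi N)))); [nra|].
  apply (Rmult_lt_reg_r (/ INR (S k))); [apply Rinv_pos; lra|].
  replace (INR (S k) * / INR (length (Phi N)) * / INR (S k))
    with (/ INR (length (Phi N))) by (field; lra).
  exact HN0.
Qed.

Record nonprincipal_ultrafilter (U : (nat -> Prop) -> Prop) : Prop := {
  uf_inter : forall X Y, U X -> U Y -> U (fun n => X n /\ Y n);
  uf_superset : forall X Y : nat -> Prop, (forall n, X n -> Y n) -> U X -> U Y;
  uf_proper : ~ U (fun _ => False);
  uf_compl : forall X, U X \/ U (fun n => ~ X n);
  uf_tail : forall k, U (fun n => (k <= n)%nat) }.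

Lemma nonprincipal_ultrafilter_exists : exists U, nonprincipal_ultrafilter U.
Proof.
  pose (Frechet := fun P : nat -> Prop => exists k, forall n, (k <= n)%nat -> P n).
  assert (HF : filter.ProperFilter Frechet).
  { constructor.
    { intros [k Hk]. exact (Hk k (le_n k)). }
    constructor.
    - exists 0%nat. intros; exact I.
    - intros P Q [k1 H1] [k2 H2]. exists (k1 + k2)%nat.
      intros n Hn. split; [apply H1 | apply H2]; lia.
    - intros P Q HPQ [k H]. exists k. auto. }
  destruct (filter.ultraFilterLemma HF) as [U [HU HFU]].
  exists U. constructor.
  - intros X Y HX HY. exact (filter.filterI HX HY).
  - intros X Y HXY. exact (filter.filterS HXY).
  - apply (@filter.ultra_proper _ _ HU).
  - intros X. exact (filter.in_ultra_setVsetC X HU).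
  - intros k. apply HFU. exists k. auto.
Qed.

Section Ultralimit.
Variable U : (nat -> Prop) -> Prop.
Hypothesis hU : nonprincipal_ultrafilter U.

Definition ulim (s : nat -> R) (r : R) : Prop :=
  forall eta, 0 < eta -> U (fun N => Rabs (s N - r) < eta).

Lemma uf_nonempty X : U X -> exists N, X N.
Proof.
  intros HX. apply NNPP. intros Hno. apply (uf_proper U hU).
  apply (uf_superset U hU X); [|exact HX]. intros n Hn. apply Hno. exists n; exact Hn.
Qed.

Lemma ulim_of_cv s r : Un_cv s r -> ulim s r.
Proof.
  intros Hcv eta Heta. destruct (Hcv eta Heta) as [N0 HN0].
  apply (uf_superset U hU _ _ (fun N HN => HN0 N HN) (uf_tail U hU N0)).
Qed.

Lemma ulim_const c : ulim (fun _ => c) c.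
Proof.
  apply ulim_of_cv. intros eta Heta. exists 0%nat. intros N _.
  unfold R_dist. rewrite Rminus_diag, Rabs_R0. exact Heta.
Qed.

(* The limit is the supremum of the [t] below which [s] stays [U]-almost surely. *)
Lemma ulim_exists s a b : (forall N, a <= s N <= b) -> exists r, ulim s r.
Proof.
  intros Hs.
  pose (below := fun t => U (fun N => t <= s N)).
  assert (Hbound : bound below).
  { exists b. intros t Ht. apply Rnot_lt_le. intros Hbt.
    apply (uf_proper U hU). refine (uf_superset U hU _ _ _ Ht).
    intros N HN. specialize (Hs N). lra. }
  assert (Hne : exists t, below t).
  { exists a. apply (uf_superset U hU _ _ (fun N _ => proj1 (Hs N)) (uf_tail U hU 0)). }
  destruct (completeness below Hbound Hne) as [r [Hub Hleast]].
  exists r. intros eta Heta.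
  assert (Hlow : exists t, below t /\ r - eta < t).
  { apply NNPP. intros Hno. assert (r <= r - eta); [|lra].
    apply Hleast. intros t Ht. apply Rnot_lt_le. intros Hlt. apply Hno. eauto. }
  destruct Hlow as [t [Ht Hrt]].
  assert (Hup : U (fun N => s N < r + eta)).
  { destruct (uf_compl U hU (fun N => s N < r + eta)) as [H|H]; [exact H|].
    assert (Hr : below (r + eta)).
    { apply (uf_superset U hU _ _ (fun N HN => Rnot_lt_le _ _ HN) H). }
    specialize (Hub _ Hr). lra. }
  refine (uf_superset U hU _ _ _ (uf_inter U hU _ _ Ht Hup)).
  intros N [H1 H2]. apply Rabs_def1; lra.
Qed.

Lemma ulim_le s t r q : (forall N, s N <= t N) -> ulim s r -> ulim t q -> r <= q.
Proof.
  intros Hst Hr Hq. apply Rnot_lt_le. intros Hlt.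
  destruct (uf_nonempty _ (uf_inter U hU _ _ (Hr ((r - q) / 2) ltac:(lra))
                                            (Hq ((r - q) / 2) ltac:(lra))))
    as [N [H1 H2]].
  apply Rabs_def2 in H1. apply Rabs_def2 in H2. specialize (Hst N). lra.
Qed.

Lemma ulim_unique s r q : ulim s r -> ulim s q -> r = q.
Proof.
  intros Hr Hq. apply Rle_antisym; [apply (ulim_le s s) | apply (ulim_le s s)];
    auto using Rle_refl.
Qed.

Lemma ulim_ext s t r : (forall N, s N = t N) -> ulim s r -> ulim t r.
Proof.
  intros Hst Hs eta Heta. refine (uf_superset U hU _ _ _ (Hs eta Heta)).
  intros N. rewrite Hst. exact (fun H => H).
Qed.

Lemma ulim_add s t r q : ulim s r -> ulim t q -> ulim (fun N => s N + t N) (r + q).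
Proof.
  intros Hr Hq eta Heta.
  refine (uf_superset U hU _ _ _
           (uf_inter U hU _ _ (Hr (eta / 2) ltac:(lra)) (Hq (eta / 2) ltac:(lra)))).
  intros N [H1 H2]. apply Rabs_def2 in H1. apply Rabs_def2 in H2.
  apply Rabs_def1; lra.
Qed.

End Ultralimit.

Record diffuse_mean (mu : (nat -> Prop) -> R) : Prop := {
  mean_mono : forall X Y : nat -> Prop, (forall n, X n -> Y n) -> mu X <= mu Y;
  mean_modular : forall X Y,
    mu (fun n => X n \/ Y n) + mu (fun n => X n /\ Y n) = mu X + mu Y;
  mean_ge0 : forall X, 0 <= mu X;
  mean_le1 : forall X, mu X <= 1;
  mean_pos_unbounded : forall X, 0 < mu X -> forall k, exists n, (k < n)%nat /\ X n }.

Section DiffuseMean.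
Variable mu : (nat -> Prop) -> R.
Hypothesis hmu : diffuse_mean mu.

Lemma mean_subadd X Y : mu (fun n => X n \/ Y n) <= mu X + mu Y.
Proof.
  pose proof (mean_modular mu hmu X Y). pose proof (mean_ge0 mu hmu (fun n => X n /\ Y n)).
  lra.
Qed.

Lemma mean_empty X : (forall n, ~ X n) -> mu X = 0.
Proof.
  intros HX. apply Rle_antisym; [|apply (mean_ge0 mu hmu)].
  apply Rnot_lt_le. intros Hpos.
  destruct (mean_pos_unbounded mu hmu X Hpos 0) as [n [_ Hn]]. exact (HX n Hn).
Qed.

End DiffuseMean.

Section DensityMean.
Variable U : (nat -> Prop) -> Prop.
Hypothesis hU : nonprincipal_ultrafilter U.
Variable Phi : nat -> list nat.

Definition density_mean (X : nat -> Prop) : R :=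
  proj1_sig (constructive_indefinite_description _
    (ulim_exists U hU (density_ratio Phi X) 0 1 (density_ratio_bounds Phi X))).

Lemma density_mean_ulim X : ulim U (density_ratio Phi X) (density_mean X).
Proof. exact (proj2_sig (constructive_indefinite_description _ _)). Qed.

Lemma density_mean_of_density X d : density_is Phi X d -> density_mean X = d.
Proof.
  intros Hd. exact (ulim_unique U hU _ _ _ (density_mean_ulim X) (ulim_of_cv U hU _ _ Hd)).
Qed.

Lemma density_mean_diffuse : Folner Phi -> diffuse_mean density_mean.
Proof.
  intros HPhi. constructor.
  - intros X Y HXY. apply (ulim_le U hU (density_ratio Phi X) (density_ratio Phi Y));
      auto using density_ratio_mono, density_mean_ulim.
  - intros X Y.
    apply (ulim_unique U hU (fun N => density_ratio Phi X N + density_ratio Phi Y N)).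
    + apply (ulim_ext U hU _ _ _ (fun N => density_ratio_modular Phi X Y N)).
      apply (ulim_add U hU); apply density_mean_ulim.
    + apply (ulim_add U hU); apply density_mean_ulim.
  - intros X. apply (ulim_le U hU (fun _ => 0) (density_ratio Phi X));
      [intros N; apply density_ratio_bounds|apply (ulim_const U hU)|apply density_mean_ulim].
  - intros X. apply (ulim_le U hU (density_ratio Phi X) (fun _ => 1));
      [intros N; apply density_ratio_bounds|apply density_mean_ulim|apply (ulim_const U hU)].
  - intros X Hpos k. apply NNPP. intros Hno.
    assert (Hbounded : forall n, X n -> (n <= k)%nat).
    { intros n Hn. apply Nat.nlt_ge. intros Hkn. apply Hno. eauto. }
    rewrite (density_mean_of_density X 0 (folner_density_bounded Phi X k HPhi Hbounded))
      in Hpos.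
    lra.
Qed.

End DensityMean.

Section SumsetConstruction.
Variable mu : (nat -> Prop) -> R.
Hypothesis hmu : diffuse_mean mu.
Variables (A L : nat -> Prop) (eps : R).
Hypothesis eps_gt0 : 0 < eps.
Hypothesis L_pos : forall n, L n -> PosN n.

Definition shift_trace (m : nat) (n : nat) : Prop := shiftset A m n /\ L n.

Definition good (K m : nat) : Prop :=
  PosN m /\ eps < mu (shift_trace m) /\ forall l, (l <= K)%nat -> L l -> A (m + l)%nat.

Hypothesis good_unbounded : forall K k, exists m, (k < m)%nat /\ good K m.

Definition good_union (K M n : nat) : Prop :=
  exists m, (K < m <= M)%nat /\ good K m /\ shift_trace m n.

Definition large (W : nat -> Prop) : Prop :=
  exists d, 0 < d /\ forall K, exists M, d <= mu (fun n => W n /\ good_union K M n).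

Definition negligible (W : nat -> Prop) : Prop :=
  forall d, 0 < d -> exists K, forall M, mu (fun n => W n /\ good_union K M n) < d.

Lemma good_antitone K K' m : (K <= K')%nat -> good K' m -> good K m.
Proof.
  intros HK [Hm [Hmu HA]]. split; [exact Hm|]. split; [exact Hmu|].
  intros l Hl. apply HA. lia.
Qed.

Lemma good_union_antitone K K' M n :
  (K <= K')%nat -> good_union K' M n -> good_union K M n.
Proof.
  intros HK [m [Hm [Hg Ht]]]. exists m. split; [lia|].
  split; [apply (good_antitone K K'); assumption|exact Ht].
Qed.

Lemma good_union_monotone K M M' n :
  (M <= M')%nat -> good_union K M n -> good_union K M' n.
Proof. intros HM [m [Hm Hg]]. exists m. split; [lia|exact Hg]. Qed.

Lemma large_mono W W' : (forall n, W n -> W' n) -> large W -> large W'.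
Proof.
  intros HW [d [Hd Hlarge]]. exists d. split; [exact Hd|]. intros K.
  destruct (Hlarge K) as [M HM]. exists M.
  eapply Rle_trans; [exact HM|]. apply (mean_mono mu hmu). intros n [Wn Hn]. auto.
Qed.

Lemma large_unbounded W : large W -> forall k, exists n, (k < n)%nat /\ W n.
Proof.
  intros [d [Hd Hlarge]]. destruct (Hlarge 0%nat) as [M HM].
  apply (mean_pos_unbounded mu hmu).
  eapply Rlt_le_trans; [exact Hd|]. eapply Rle_trans; [exact HM|].
  apply (mean_mono mu hmu). tauto.
Qed.

Lemma large_L : large L.
Proof.
  exists eps. split; [exact eps_gt0|]. intros K.
  destruct (good_unbounded K K) as [m [Hm Hg]]. exists m.
  eapply Rlt_le, Rlt_le_trans; [apply Hg|]. apply (mean_mono mu hmu).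
  intros n Hn. split; [apply Hn|]. exists m. split; [lia|]. auto.
Qed.

Lemma negligible_mono W W' : (forall n, W n -> W' n) -> negligible W' -> negligible W.
Proof.
  intros HW Hneg d Hd. destruct (Hneg d Hd) as [K HK]. exists K. intros M.
  eapply Rle_lt_trans; [|apply (HK M)]. apply (mean_mono mu hmu). intros n [Wn Hn]. auto.
Qed.

Lemma negligible_empty W : (forall n, ~ W n) -> negligible W.
Proof.
  intros HW d Hd. exists 0%nat. intros M.
  rewrite (mean_empty mu hmu); [exact Hd|]. intros n [Wn _]. exact (HW n Wn).
Qed.

Lemma negligible_union W1 W2 :
  negligible W1 -> negligible W2 -> negligible (fun n => W1 n \/ W2 n).
Proof.
  intros H1 H2 d Hd.
  destruct (H1 (d / 2) ltac:(lra)) as [K1 HK1]. destruct (H2 (d / 2) ltac:(lra)) as [K2 HK2].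
  exists (Nat.max K1 K2). intros M.
  eapply Rle_lt_trans.
  { apply (mean_mono mu hmu _
      (fun n => (W1 n /\ good_union K1 M n) \/ (W2 n /\ good_union K2 M n))).
    intros n [[W1n|W2n] Hn]; [left|right]; split; try assumption;
      (apply (good_union_antitone _ (Nat.max K1 K2)); [lia|exact Hn]). }
  eapply Rle_lt_trans; [apply (mean_subadd mu hmu)|].
  specialize (HK1 M). specialize (HK2 M). lra.
Qed.

Lemma not_large_negligible W : ~ large W -> negligible W.
Proof.
  intros Hno d Hd. apply NNPP. intros HnoK. apply Hno.
  exists d. split; [exact Hd|]. intros K. apply NNPP. intros HnoM. apply HnoK.
  exists K. intros M. apply Rnot_le_lt. intros HM. apply HnoM. exists M. exact HM.
Qed.

Lemma negligible_good_union W K :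
  (forall m, (K < m)%nat -> good K m -> negligible (fun n => W n /\ shift_trace m n)) ->
  forall M, negligible (fun n => W n /\ good_union K M n).
Proof.
  intros Hpieces M. induction M as [|M IH].
  { apply negligible_empty. intros n [_ [m [Hm _]]]. lia. }
  apply (negligible_mono _ (fun n => (W n /\ good_union K M n)
                                \/ (W n /\ (K < S M)%nat /\ good K (S M) /\ shift_trace (S M) n))).
  { intros n [Wn [m [Hm [Hg Ht]]]]. destruct (Nat.eq_dec m (S M)) as [->|Hne].
    - right. split; [exact Wn|]. split; [lia|auto].
    - left. split; [exact Wn|]. exists m. split; [lia|auto]. }
  apply negligible_union; [exact IH|].
  destruct (classic ((K < S M)%nat /\ good K (S M))) as [[HK Hg]|Hno].
  - apply (negligible_mono _ _ (fun n Hn => conj (proj1 Hn) (proj2 (proj2 (proj2 Hn))))).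
    apply Hpieces; assumption.
  - apply negligible_empty. tauto.
Qed.

Lemma large_not_negligible_good_union W K :
  large W -> ~ (forall M, negligible (fun n => W n /\ good_union K M n)).
Proof.
  intros [d [Hd Hlarge]] Hneg.
  pose (a := fun M => mu (fun n => W n /\ good_union K M n)).
  destruct (growing_bounded_tail a 1 (d / 2)) as [M0 HM0].
  { intros M. apply (mean_mono mu hmu). intros n [Wn Hn].
    split; [exact Wn|]. apply (good_union_monotone K M); [lia|exact Hn]. }
  { intros M. apply (mean_le1 mu hmu). }
  { lra. }
  destruct (Hneg M0 (d / 2) ltac:(lra)) as [K2 HK2].
  destruct (Hlarge (Nat.max K K2)) as [M HM].
  pose (M' := Nat.max M M0).
  pose (P := fun n => W n /\ good_union (Nat.max K K2) M' n).
  pose (Q := fun n => W n /\ good_union K M0 n).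
  assert (HP : d <= mu P).
  { eapply Rle_trans; [exact HM|]. apply (mean_mono mu hmu). intros n [Wn Hn].
    split; [exact Wn|]. apply (good_union_monotone _ M); [lia|exact Hn]. }
  assert (HPQ : mu (fun n => P n \/ Q n) <= a M').
  { apply (mean_mono mu hmu). intros n [[Wn Hn]|[Wn Hn]]; split; try exact Wn.
    - apply (good_union_antitone _ (Nat.max K K2)); [lia|exact Hn].
    - apply (good_union_monotone _ M0); [lia|exact Hn]. }
  assert (HPiQ : mu (fun n => P n /\ Q n) < d / 2).
  { eapply Rle_lt_trans; [|exact (HK2 M')]. apply (mean_mono mu hmu).
    intros n [[Wn Hn] HQ]. split; [exact HQ|].
    apply (good_union_antitone _ (Nat.max K K2)); [lia|exact Hn]. }
  pose proof (mean_modular mu hmu P Q).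
  specialize (HM0 M' ltac:(lia)). change (a M0) with (mu Q) in HM0.
  lra.
Qed.

Lemma large_refine W :
  large W -> forall K k,
  exists m, (k < m)%nat /\ good K m /\ large (fun n => W n /\ shift_trace m n).
Proof.
  intros HW K k. apply NNPP. intros Hno.
  apply (large_not_negligible_good_union W (K + k) HW), negligible_good_union.
  intros m Hm Hg. apply not_large_negligible. intros Hlarge. apply Hno.
  exists m. split; [lia|]. split; [|exact Hlarge].
  apply (good_antitone K (K + k)); [lia|exact Hg].
Qed.

Definition common_shifts (cs : list nat) (n : nat) : Prop :=
  L n /\ forall c, In c cs -> A (n + c)%nat.

Definition stage (bs cs : list nat) : Prop :=
  (forall b, In b bs -> L b) /\ (forall c, In c cs -> PosN c) /\
  (forall b c, In b bs -> In c cs -> A (b + c)%nat) /\ large (common_shifts cs).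

Lemma stage_nil : stage nil nil.
Proof.
  split; [intros b []|]. split; [intros c []|]. split; [intros b c []|].
  apply (large_mono L); [|exact large_L]. intros n Ln. split; [exact Ln|]. intros c [].
Qed.

Lemma stage_extend bs cs k :
  stage bs cs -> exists b c, (k < b)%nat /\ (k < c)%nat /\ stage (b :: bs) (c :: cs).
Proof.
  intros [HL [Hpos [HA Hlarge]]].
  destruct (large_refine _ Hlarge (list_max bs) k) as [c [Hkc [[Hc [_ Hgood]] Hlc]]].
  assert (Hlarge' : large (common_shifts (c :: cs))).
  { refine (large_mono _ _ _ Hlc). intros n [[Ln HAn] [[_ HAc] _]].
    split; [exact Ln|]. intros c' [<-|Hc']; auto. }
  destruct (large_unbounded _ Hlarge' k) as [b [Hkb [Lb HAb]]].
  exists b, c. split; [exact Hkb|]. split; [exact Hkc|].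
  split; [|split; [|split]].
  - intros b' [<-|Hb']; auto.
  - intros c' [<-|Hc']; auto.
  - intros b' c' [<-|Hb'] Hc'; [auto|].
    destruct Hc' as [<-|Hc']; [|auto].
    rewrite Nat.add_comm. apply Hgood; [apply In_le_list_max|apply HL]; exact Hb'.
  - exact Hlarge'.
Qed.

Theorem sumset_in_A : exists B C : nat -> Prop,
    (forall n, B n -> PosN n) /\ (forall n, C n -> PosN n) /\
    infinite_set B /\ infinite_set C /\
    (forall b c, B b -> C c -> A (b + c)%nat).
Proof.
  apply (sumset_of_extendable A stage stage_nil).
  - intros bs cs k. apply stage_extend.
  - intros bs cs [HL [Hpos [HA _]]]. split; [|auto]. intros b Hb. apply L_pos, HL, Hb.
Qed.

End SumsetConstruction.

Theorem proposition2p5 (A : nat -> Prop) (HA : forall n, A n -> PosN n) :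
  (exists (Phi : nat -> list nat) (L : nat -> Prop) (eps : R),
     Folner Phi /\ (forall n, L n -> PosN n) /\ eps > 0 /\
     (forall m, PosN m -> exists d,
        density_is Phi (fun n => shiftset A m n /\ L n) d) /\
     (forall F : list nat, (forall l, In l F -> L l) ->
        infinite_set (fun m =>
          PosN m /\ (forall l, In l F -> shiftset A l m) /\
          exists d, density_is Phi (fun n => shiftset A m n /\ L n) d /\ d > eps))) ->
  exists B C : nat -> Prop,
    (forall n, B n -> PosN n) /\ (forall n, C n -> PosN n) /\
    infinite_set B /\ infinite_set C /\
    (forall b c, B b -> C c -> A (b + c)%nat).
Proof.
  intros [Phi [L [eps [HPhi [HL [Heps [_ Hheavy]]]]]]].
  destruct nonprincipal_ultrafilter_exists as [U hU].
  apply (sumset_in_A _ (density_mean_diffuse U hU Phi HPhi) A L eps Heps HL).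
  intros K k.
  destruct (list_of_bounded_pred L K) as [F HF].
  destruct (Hheavy F (fun l Hl => proj2 (proj1 (HF l) Hl)) k)
    as [m [Hkm [Hm [HAF [d [Hd Hde]]]]]].
  exists m. split; [exact Hkm|]. split; [exact Hm|]. split.
  - unfold shift_trace. rewrite (density_mean_of_density U hU Phi _ d Hd). lra.
  - intros l Hl Ll. apply (HAF l), HF. auto.
Qed.
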